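(* Let $T$ be a permutation tableau. Then $\mathrm{inv}(T)=0$ if and only if $T$ is an L-Bell tableau.
   Context: Permutation tableaux. Draw a Ferrers diagram in English convention: rows are left-justified, row lengths weakly decrease from top to bottom, and every column is nonempty. Rows of length zero are allowed. A permutation tableau $T$ is a filling of the cells of such a diagram with 0's and 1's satisfying two conditions: (i) every column contains at least one 1; (ii) no cell containing 0 has both a 1 above it in its column and a 1 to its left in its row. Its length $n$ is the number of rows plus the number of columns. Labels. The southeast boundary path of $n$ unit south/west steps, from the top-right corner to the bottom-left corner, has its steps labeled $1,\ldots,n$ in order. Each row gets the label of its south step (at the right end of the row), and each column the label of its west step. $(i,j)$ denotes the cell in row $i$ and column $j$. Zeros, ones and rows. A 1 is topmost if there is no 1 above it in its column. A 0 is restricted if there is a 1 above it in its column. A rightmost restricted 0 is a restricted 0 with no restricted 0 to its right in its row. A row is unrestricted if it contains no restricted 0; empty rows are unrestricted. L-Bell tableau. A permutation tableau is an L-Bell tableau if every topmost 1 is also the leftmost 1 of its row, i.e. there is no 1 to its left in the same row. Dots. Black dots are placed on the topmost 1's (one per column), each labeled by its column label. White dots are placed on the rightmost restricted 0's (one per restricted row), each labeled by its row label. Alternating paths. An alternating path is a sequence of dots, identified with the sequence of their labels, built as follows. - From a white dot in cell $(i,j)$, the next dot is the black dot of column $j$. - From a black dot in cell $(i,j)$: if row $i$ is unrestricted, the path ends; otherwise the next dot is the white dot of row $i$. - If $k$ is a column label or the label of a restricted row, $P_k$ is the path starting at the dot labeled $k$. - If $r$ is the label of an unrestricted row, $P_r$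 is the empty path. $P_k$ is contained in a path $P$ if $k$ labels a dot of $P$. Empty paths are contained in no path. Order on paths. Let $P_a,P_b$ be two paths, neither contained in the other. Remove their longest common final segment, obtaining $P'_a,P'_b$. The ending position of $P'_a$ is defined as follows: - if $P'_a$ is nonempty, it is the cell of its last dot; - if $P_a$ is the empty path of an unrestricted row $r$, it is a point at the right end of row $r$, strictly to the right of all its cells. $P_a>P_b$ if the ending position of $P'_a$ is in a strictly lower row than that of $P'_b$, or in the same row and strictly to the right. Otherwise $P_a<P_b$. Inversions. An inversion is a pair $(j,k)$ of labels satisfying all of the following: $j$ is a column label; $j<k$; $k$ is not the label of a dot of $P_j$; and $P_j>P_k$. $\mathrm{inv}(T)$ is the number of inversions. *)

From mathcomp Require Import all_boot.
Set Implicit Arguments. Unset Strict Implicit. Unset Printing Implicit Defensive.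

(* A tableau of length [len] is encoded by its southeast boundary path:
   the steps are labeled 1..len; [isrow k] says step k is a south step
   (so k labels a row), otherwise k labels a column.  Row i is above row i'
   iff i < i'; column j is to the LEFT of column j' iff j > j'.
   [fill i j] is the entry (true = 1, false = 0) of cell (i,j); values
   outside cells are irrelevant. *)
Record tableau := Tableau {
  len : nat;
  isrow : nat -> bool;
  fill : nat -> nat -> bool }.

Section Defs.
Variable T : tableau.

Definition labels := iota 1 (len T).
Definition isRowL (i : nat) := (i \in labels) && isrow T i.
Definition isCol (j : nat) := (j \in labels) && ~~ isrow T j.
Definition cell (i j : nat) := [&& isRowL i, isCol j & i < j].

Definition one_above (i j : nat) :=
  has (fun i' => [&& isRowL i', i' < i & fill T i' j]) labels.
Definition one_left (i j : nat) :=
  has (fun j' => [&& isCol j', j < j' & fill T i j']) labels.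

Definition is_perm_tableau : Prop :=
  (forall j, isCol j -> exists i, cell i j && fill T i j) /\
  (forall i j, cell i j -> ~~ fill T i j -> ~ (one_above i j && one_left i j)).

Definition topmost1 (i j : nat) := [&& cell i j, fill T i j & ~~ one_above i j].

Definition is_LBell : Prop :=
  forall i j, topmost1 i j -> ~~ one_left i j.

Definition restricted0 (i j : nat) := [&& cell i j, ~~ fill T i j & one_above i j].
Definition restrictedRow (i : nat) := isRowL i && has (restricted0 i) labels.

(* row of the black dot (topmost 1) of column j *)
Definition top (j : nat) :=
  nth 0 [seq i <- labels | cell i j && fill T i j] 0.
(* column of the white dot (rightmost restricted 0) of row i:
   rightmost = smallest column label *)
Definition wcol (i : nat) := nth 0 [seq j <- labels | restricted0 i j] 0.

Definition dotpos (k : nat) : nat * nat :=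
  if isCol k then (top k, k) else (k, wcol k).

Definition next (k : nat) : option nat :=
  if isCol k then
    (if restrictedRow (top k) then Some (top k) else None)
  else if restrictedRow k then Some (wcol k) else None.

Fixpoint pathf (fuel k : nat) : seq nat :=
  match fuel with
  | 0 => [::]
  | f.+1 => k :: (match next k with Some k' => pathf f k' | None => [::] end)
  end.

(* alternating path P_k; the fuel 2*len+2 exceeds the maximal length of an
   alternating path (rows strictly decrease along it). *)
Definition P (k : nat) : seq nat :=
  if isCol k || restrictedRow k then pathf (len T).*2.+2 k else [::].

(* P_k contained in path Q (empty paths are contained in no path) *)
Definition contained (k : nat) (Q : seq nat) := (P k != [::]) && (k \in Q).

Fixpoint common_prefix (s t : seq nat) : nat :=
  match s, t with
  | x :: s', y :: t' => if x == y then (common_prefix s' t').+1 else 0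
  | _, _ => 0
  end.

(* P'_a : P_a with the longest common final segment with P_b removed *)
Definition strip (a b : nat) : seq nat :=
  let ra := rev (P a) in let rb := rev (P b) in
  rev (drop (common_prefix ra rb) ra).

(* ending position (row, column key); the point at the right end of an
   unrestricted row r is (r, 0): column key 0 is strictly right of every
   column label (labels are >= 1, smaller label = further right). *)
Definition endpos (a b : nat) : nat * nat :=
  let s := strip a b in
  if s is x :: _ then dotpos (last x s) else (a, 0).

Definition path_gt (a b : nat) : bool :=
  [&& ~~ contained a (P b), ~~ contained b (P a) &
   let: (ra, ca) := endpos a b in let: (rb, cb) := endpos b a in
   (rb < ra) || ((ra == rb) && (ca < cb))].

Definition inversion (j k : nat) : bool :=
  [&& isCol j, j < k, k \in labels, k \notin P j & path_gt j k].

Definition tab_inv : nat :=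
  count (fun p : nat * nat => inversion p.1 p.2) [seq (j, k) | j <- labels, k <- labels].

End Defs.

From mathcomp Require Import all_boot zify_ssreflect.
Set Implicit Arguments. Unset Strict Implicit. Unset Printing Implicit Defensive.

(* Call a column L-Bell when its topmost 1 is the leftmost 1 of its row.  The
   Le-condition forces every alternating path to move weakly up and to the left,
   and a path through L-Bell columns passes strictly above the black dot of any
   column it jumps over.  Comparing two paths at the dots just before they merge
   (or at their ends), this shows that a path starting at an L-Bell column j is
   always smaller than a path starting further left, or at a row below j: in an
   L-Bell tableau there is no inversion.  Conversely, let j be the leftmost
   column whose topmost 1 has a 1 to its left, in column k; all columns left of
   j are L-Bell, and the same comparison (or, if the topmost 1 of k is in the
   same row, the two one-dot differences) shows that (j, k) is an inversion. *)

Lemma nth_filter_iota_min (p : pred nat) m n x : x \in iota m n -> p x ->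
  let f := nth 0 [seq i <- iota m n | p i] 0 in [/\ p f, f \in iota m n & f <= x].
Proof.
elim: n m => [|n IH] m //=; rewrite inE => /orP[/eqP <- px | xI px].
  by rewrite px /= inE eqxx.
case pm: (p m) => /=.
  by rewrite pm inE eqxx; move: xI; rewrite mem_iota => /andP[/ltnW].
by have [? fI ?] := IH m.+1 xI px; rewrite inE fI orbT.
Qed.

Lemma take_common_prefix s t :
  take (common_prefix s t) s = take (common_prefix s t) t.
Proof. by elim: s t => [|x s IH] [|y t] //=; case: eqP => [->|] //=; rewrite IH. Qed.

Lemma common_prefix_leq s t : common_prefix s t <= size s.
Proof.
by elim: s t => [|x s IH] [|y t] //=; case: eqP => //= _; rewrite ltnS IH.
Qed.

Lemma common_prefixC s t : common_prefix s t = common_prefix t s.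
Proof.
elim: s t => [|x s IH] [|y t] //=.
case: eqP => [->|ne_xy]; first by rewrite eqxx IH.
by case: eqP => // eq_yx; case: ne_xy.
Qed.

Lemma common_prefix_max n s t : n <= size s -> n <= size t ->
  take n s = take n t -> n <= common_prefix s t.
Proof.
elim: s t n => [|x s IH] [|y t] [|n] //= sn tn [-> eq_st].
by rewrite eqxx ltnS IH.
Qed.

Lemma common_prefix_nil s : common_prefix s [::] = 0.
Proof. by case: s. Qed.

Lemma common_prefix_rcons s a b : a != b -> common_prefix (rcons s a) (rcons s b) = size s.
Proof. by move=> /negbTE ab; elim: s => [|x s IH] /=; rewrite ?ab ?eqxx ?IH. Qed.

Section Tableau.
Variable T : tableau.
Hypothesis T_perm : is_perm_tableau T.

Local Notation labels := (labels T).
Local Notation isCol := (isCol T).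
Local Notation cell := (cell T).
Local Notation fill := (fill T).
Local Notation one_left := (one_left T).
Local Notation topmost1 := (topmost1 T).
Local Notation restricted0 := (restricted0 T).
Local Notation restrictedRow := (restrictedRow T).
Local Notation top := (top T).
Local Notation wcol := (wcol T).
Local Notation dotpos := (dotpos T).
Local Notation next := (next T).
Local Notation P := (P T).
Local Notation endpos := (endpos T).
Local Notation path_gt := (path_gt T).
Local Notation contained := (contained T).
Local Notation inversion := (inversion T).

Lemma labelsP k : (k \in labels) = (1 <= k <= len T).
Proof. by rewrite /labels mem_iota addnC addn1 ltnS. Qed.

Lemma isCol_label j : isCol j -> j \in labels.
Proof. by case/andP. Qed.

Lemma top_spec j : isCol j ->
  [/\ cell (top j) j, fill (top j) j & forall i, cell i j -> fill i j -> top j <= i].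
Proof.
pose p i := cell i j && fill i j.
have top_min i : cell i j -> fill i j -> [/\ p (top j), top j \in labels & top j <= i].
  move=> cij fij; apply: (nth_filter_iota_min (p := p)); last exact/andP.
  by case/and3P: cij => /andP[].
move=> /(proj1 T_perm) [i /andP[cij fij]].
have [/andP[ctj ftj] _ _] := top_min i cij fij.
by split=> // i' ci'j fi'j; case: (top_min i' ci'j fi'j).
Qed.

Lemma wcol_spec i : restrictedRow i ->
  restricted0 i (wcol i) /\ forall j, restricted0 i j -> wcol i <= j.
Proof.
have wcol_min j : restricted0 i j -> [/\ restricted0 i (wcol i), wcol i \in labels & wcol i <= j].
  move=> r0; apply: (nth_filter_iota_min (p := restricted0 i)) => //.
  by case/and3P: r0 => /and3P[_ /andP[]].
case/andP=> _ /hasP[j _ /wcol_min[r0w _ _]].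
by split=> // j' /wcol_min[].
Qed.

Lemma topmost1_top i j : topmost1 i j -> i = top j.
Proof.
case/and3P=> cij fij no_above; have [_ jC ij] := and3P cij.
have [ctj ftj top_min] := top_spec jC.
case: (ltngtP (top j) i) (top_min i cij fij) => // ti _.
case/negP: no_above; apply/hasP; exists (top j); first by case/and3P: ctj => /andP[].
by case/and3P: ctj => -> _ _; rewrite ti ftj.
Qed.

Lemma top_topmost1 j : isCol j -> topmost1 (top j) j.
Proof.
move=> jC; have [ctj ftj top_min] := top_spec jC.
rewrite /topmost1 ctj ftj /=; apply/hasP => -[i' _ /and3P[i'R i't fi'j]].
have i'j : i' < j by case/and3P: ctj => _ _; apply: ltn_trans.
have := top_min i' _ fi'j; rewrite /cell i'R jC i'j leqNgt i't.
by move/(_ isT).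
Qed.

Lemma one_leftI i c d : isCol d -> c < d -> fill i d -> one_left i c.
Proof. by move=> dC cd fid; apply/hasP; exists d; rewrite ?isCol_label ?dC ?cd ?fid. Qed.

(* A 1 left of the white dot would be a 1 left of a restricted 0. *)
Lemma fill_lt_wcol i d : isCol d -> fill i d -> restrictedRow i -> d < wcol i.
Proof.
move=> dC fid /wcol_spec[/and3P[ciw fiw above_w] _].
case: (ltngtP d (wcol i)) => // [wd|dw]; last by rewrite -dw fid in fiw.
by case: (proj2 T_perm _ _ ciw fiw); rewrite above_w (one_leftI dC wd fid).
Qed.

Lemma isCol_wcol i : restrictedRow i -> isCol (wcol i).
Proof. by case/wcol_spec => /and3P[/and3P[]]. Qed.

Lemma ltn_wcol i : restrictedRow i -> i < wcol i.
Proof. by case/wcol_spec => /and3P[/and3P[]]. Qed.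

Lemma top_wcol_lt i : restrictedRow i -> top (wcol i) < i.
Proof.
case/wcol_spec => /and3P[ciw _ /hasP[i' _ /and3P[i'R i'i fi'w]]] _.
have [_ wC iw] := and3P ciw; have [_ _ top_min] := top_spec wC.
have ci'w : cell i' (wcol i) by rewrite /cell i'R wC (ltn_trans i'i iw).
exact: leq_ltn_trans (top_min _ ci'w fi'w) i'i.
Qed.

Lemma restrictedRow_notCol i : restrictedRow i -> ~~ isCol i.
Proof. by case/andP => /andP[_ iR] _; rewrite /isCol iR andbF. Qed.

Definition bell_col c := isCol c && ~~ one_left (top c) c.

Lemma LBell_bell_col c : is_LBell T -> isCol c -> bell_col c.
Proof. by move=> LB cC; rewrite /bell_col cC LB // top_topmost1. Qed.

(* Otherwise the cell of [d] in the row of the black dot of [c] would be a 1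
   left of that topmost 1, or a restricted 0 right of the white dot. *)
Lemma bell_top_lt c d : bell_col c -> isCol d -> c < d ->
  (restrictedRow (top c) -> d < wcol (top c)) -> top c < top d.
Proof.
move=> /andP[cC no_left] dC cd right_of_w.
have [ctc ftc _] := top_spec cC; have [ctd ftd _] := top_spec dC.
have [tcR _ tcc] := and3P ctc; have [tdR _ _] := and3P ctd.
case: (ltngtP (top c) (top d)) => // [td_tc|tc_td]; last first.
  by rewrite tc_td (one_leftI dC cd ftd) in no_left.
case ftcd: (fill (top c) d); first by rewrite (one_leftI dC cd ftcd) in no_left.
have r0 : restricted0 (top c) d.
  rewrite /restricted0 /cell tcR dC (ltn_trans tcc cd) ftcd /=.
  by apply/hasP; exists (top d); rewrite ?tdR ?td_tc ?ftd //; case/andP: tdR.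
have tcRR : restrictedRow (top c).
  by rewrite /restrictedRow tcR; apply/hasP; exists d; rewrite ?isCol_label.
have [_ w_min] := wcol_spec tcRR.
by move: (w_min _ r0); rewrite leqNgt right_of_w.
Qed.

Lemma next_col k : isCol k -> next k = if restrictedRow (top k) then Some (top k) else None.
Proof. by rewrite /next => ->. Qed.

Lemma next_restrictedRow i : restrictedRow i -> next i = Some (wcol i).
Proof. by move=> iR; rewrite /next (negbTE (restrictedRow_notCol iR)) iR. Qed.

Lemma next_col_Some c k : isCol c -> next c = Some k -> k = top c /\ restrictedRow k.
Proof. by move=> cC; rewrite next_col //; case: ifP => // tR [<-]. Qed.

Lemma next_SomeP k k' : next k = Some k' ->
  isCol k /\ k' = top k /\ restrictedRow k' \/ ~~ isCol k /\ restrictedRow k /\ k' = wcol k.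
Proof. by rewrite /next; case: ifP => kC; case: ifP => // kR [<-]; [left | right]. Qed.

Lemma next_row_restricted k k' : next k = Some k' -> ~~ isCol k' -> restrictedRow k'.
Proof.
case/next_SomeP => [[_ [_ //]] | [_ [kR ->]]].
by rewrite isCol_wcol.
Qed.

Lemma dotpos_col k : isCol k -> dotpos k = (top k, k).
Proof. by rewrite /dotpos => ->. Qed.

Lemma dotpos_row k : ~~ isCol k -> dotpos k = (k, wcol k).
Proof. by rewrite /dotpos => /negbTE ->. Qed.

Lemma next_dotpos k k' : next k = Some k' ->
  (dotpos k').1 <= (dotpos k).1 /\ (dotpos k).2 <= (dotpos k').2.
Proof.
case/next_SomeP => [[kC [-> tR]] | [kC [kR ->]]].
  rewrite (dotpos_col kC) (dotpos_row (restrictedRow_notCol tR)) /=.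
  by have [_ ftk _] := top_spec kC; rewrite (ltnW (fill_lt_wcol kC ftk tR)).
rewrite (dotpos_row kC) (dotpos_col (isCol_wcol kR)) /=.
by rewrite (ltnW (top_wcol_lt kR)).
Qed.

(* Along a path a step from a column keeps the row of the dot and a step from a
   row strictly raises it, so this rank decreases. *)
Definition dot_rank k := if isCol k then (top k).*2.+1 else k.*2.

Lemma next_rank_lt k k' : next k = Some k' -> dot_rank k' < dot_rank k.
Proof.
case/next_SomeP => [[kC [-> tR]] | [kC [kR ->]]].
  by rewrite /dot_rank kC (negbTE (restrictedRow_notCol tR)).
by rewrite /dot_rank isCol_wcol // (negbTE kC) -doubleS leq_double top_wcol_lt.
Qed.

Fixpoint apath (s : seq nat) : bool :=
  if s is x :: s' then
    if s' is y :: _ then (next x == Some y) && apath s' else next x == None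
  else true.

Lemma apath_cons x s : apath (x :: s) -> apath s.
Proof. by case: s => //= y s /andP[]. Qed.

Lemma apath_drop n s : apath s -> apath (drop n s).
Proof. by elim: s n => [|x s IH] [|n] //= /apath_cons; apply: IH. Qed.

Lemma apath_nth_next s p : apath s -> p < size s ->
  next (nth 0 s p) = if p.+1 < size s then Some (nth 0 s p.+1) else None.
Proof.
elim: s p => [|x [|y s] IH] // [|p] //=; first by move/eqP.
  by case/andP => /eqP ->.
by case/andP => _ /IH; apply.
Qed.

Lemma apath_det x y s t : apath (x :: s) -> apath (y :: t) -> next x = next y -> s = t.
Proof.
elim: s x y t => [|a s IH] x y [|b t] //=.
- by move=> /eqP -> /andP[/eqP -> _].
- by move=> /andP[/eqP -> _] /eqP ->.
move=> /andP[/eqP -> aP] /andP[/eqP -> bP] [ab].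
by rewrite -ab in bP *; rewrite (IH a a t aP bP).
Qed.

Lemma apath_from s x : apath s -> x \in s -> apath (x :: drop (index x s).+1 s).
Proof.
move=> sP xs; have := apath_drop (index x s) sP.
by rewrite (drop_nth 0) ?index_mem ?nth_index.
Qed.

Lemma apath_suffix s t x : apath s -> apath t -> x \in s -> x \in t ->
  drop (index x s) s = drop (index x t) t.
Proof.
move=> sP tP xs xt.
rewrite (drop_nth 0 (_ : index x s < _)) ?(drop_nth 0 (_ : index x t < _)) ?index_mem //.
rewrite !nth_index //; congr (_ :: _).
exact: apath_det (apath_from sP xs) (apath_from tP xt) _.
Qed.

Lemma apath_dotpos_head s e : apath s -> e \in s ->
  (dotpos e).1 <= (dotpos (head 0 s)).1 /\ (dotpos (head 0 s)).2 <= (dotpos e).2.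
Proof.
elim: s => [|x s IH] //= xs; rewrite inE => /orP[/eqP -> // | es].
case: s IH xs es => [|y s] // IH /andP[/eqP nx ys] es.
have [le1 le2] := IH ys es; have [le3 le4] := next_dotpos nx.
by split; [apply: leq_trans le1 le3 | apply: leq_trans le4 le2].
Qed.

Lemma apath_pred s y : apath s -> y \in s -> y != head 0 s ->
  exists2 d, d \in s & next d = Some y.
Proof.
elim: s => [|x s IH] //= xs; rewrite inE => /orP[/eqP -> | ys]; first by rewrite eqxx.
case: s IH xs ys => [|z s] // IH /andP[/eqP nx zs] ys _.
have [-> | ne] := eqVneq y z; first by exists x; rewrite ?inE ?eqxx.
by have [d ds nd] := IH zs ys ne; exists d; rewrite // inE ds orbT.
Qed.

Lemma apath_rows s : apath s -> (~~ isCol (head 0 s) -> restrictedRow (head 0 s)) ->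
  {in s, forall e, ~~ isCol e -> restrictedRow e}.
Proof.
move=> sP hR e es; have [-> // | ne] := eqVneq e (head 0 s).
by have [d _ /next_row_restricted] := apath_pred sP es ne.
Qed.

Definition is_dot k := isCol k || restrictedRow k.

Local Notation pathf := (pathf T).

Lemma P_nil k : ~~ is_dot k -> P k = [::].
Proof. by move=> /negbTE kD; rewrite /P ifF. Qed.

Lemma P_cons k : is_dot k -> exists t, P k = k :: t.
Proof. by move=> kD; rewrite /P ifT //; case: (len T); eexists. Qed.

Lemma P_neq0 k : is_dot k -> P k != [::].
Proof. by case/P_cons => t ->. Qed.

Lemma P_head k : P k != [::] -> head 0 (P k) = k.
Proof. by case: (boolP (is_dot k)) => [/P_cons[t ->] | /P_nil ->]. Qed.

Lemma pathf_apath f k : dot_rank k < f -> apath (pathf f k).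
Proof.
elim: f k => [|f IH] k //= rk; case nk: (next k) => [k'|] //.
have rk' : dot_rank k' < f := leq_ltn_trans (next_rank_lt nk) rk.
have := IH k' rk'; case: f {IH rk} rk' => [|f] // _.
by move=> k'P; rewrite /= eqxx.
Qed.

Lemma P_apath k : apath (P k).
Proof.
rewrite /P; case: ifP => // kD; apply: pathf_apath; rewrite /dot_rank.
case: ifP => kC.
  have [/and3P[/andP[tL _] _ _] _ _] := top_spec kC.
  by rewrite labelsP in tL; case/andP: tL => _ ?; rewrite !ltnS leq_double.
have /andP[/andP[kL _] _] : restrictedRow k by move: kD; rewrite kC.
by rewrite labelsP in kL; case/andP: kL => _ ?; rewrite ltnS leqW // leq_double.
Qed.

Lemma P_rows k : {in P k, forall e, ~~ isCol e -> restrictedRow e}.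
Proof.
case: (boolP (is_dot k)) => [kD | /P_nil -> //].
apply: apath_rows; first exact: P_apath.
by rewrite P_head ?P_neq0 //; case/orP: kD => ->.
Qed.

Lemma top_lt j : isCol j -> top j < j.
Proof. by case/top_spec => /and3P[]. Qed.

Lemma P_cols_ge k d : d \in P k -> isCol d -> k <= d.
Proof.
move=> dk dC; have kD : is_dot k by apply: contraTT dk => /P_nil ->.
have [_] := apath_dotpos_head (P_apath k) dk.
rewrite P_head ?P_neq0 // (dotpos_col dC) /=.
case/orP: kD => [kC | kR]; first by rewrite dotpos_col.
by rewrite dotpos_row ?restrictedRow_notCol //=; apply: leq_trans (ltnW (ltn_wcol kR)).
Qed.

Lemma P_cols j d : isCol j -> d \in P j -> isCol d ->
  d = j \/ restrictedRow (top j) /\ wcol (top j) <= d.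
Proof.
move=> jC; have jP := P_apath j; have [t Pj] : exists t, P j = j :: t.
  by apply: P_cons; rewrite /is_dot jC.
rewrite Pj inE in jP * => /orP[/eqP -> _ | dt dC]; [by left | right].
case: t {Pj} jP dt => [|i [|w t]] //=; rewrite next_col //.
  by case: ifP => // tR /andP[/eqP[<-]] /eqP; rewrite next_restrictedRow.
case: ifP => // tR /andP[/eqP[<-]] /andP[/eqP].
rewrite next_restrictedRow // => -[<-] wP.
rewrite inE => /orP[/eqP dt | dw].
  by rewrite dt (negbTE (restrictedRow_notCol tR)) in dC.
split=> //; have [_] := apath_dotpos_head (s := wcol (top j) :: t) wP dw.
by rewrite /= !dotpos_col ?isCol_wcol.
Qed.

Lemma apath_next_mem s x z : apath s -> x \in s -> next x = Some z -> z \in s.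
Proof.
move=> sP xs nx; have := apath_from sP xs.
case E: (drop _ s) => [|z' r] /=; first by rewrite nx.
case/andP=> /eqP; rewrite nx => -[->] _.
by apply: (mem_drop (n0 := (index x s).+1)); rewrite E mem_head.
Qed.

Lemma apath_next_cols s x z : apath s -> x \in s -> next x = Some z -> isCol z ->
  {in drop (index x s).+1 s, forall e, isCol e -> z <= e}.
Proof.
move=> sP xs nx zC e es eC; have := apath_from sP xs.
case: (drop _ s) es => [|z' r] //= er; rewrite nx => /andP[/eqP[ez] rP]; subst z'.
by have [_] := apath_dotpos_head (s := z :: r) rP er; rewrite /= !dotpos_col.
Qed.

Lemma bell_col_top_inj c d : bell_col c -> bell_col d -> top c = top d -> c = d.
Proof.
move=> /andP[cC c_left] /andP[dC d_left] tcd.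
have [_ fc _] := top_spec cC; have [_ fd _] := top_spec dC.
case: (ltngtP c d) => // [cd | dc].
  by rewrite tcd (one_leftI dC cd fd) in c_left.
by rewrite -tcd (one_leftI cC dc fc) in d_left.
Qed.

(* A path of L-Bell columns passes strictly above the black dot of every column
   it jumps over. *)
Lemma bell_apath_above s d : apath s -> isCol (head 0 s) ->
  {in s, forall e, isCol e -> bell_col e} ->
  isCol d -> head 0 s < d -> d \notin s ->
  forall p, p < size s -> {in drop p.+1 s, forall e, isCol e -> d < e} ->
  (dotpos (nth 0 s p)).1 < top d.
Proof.
have [n] := ubnP (size s).
elim: n s => // n IH [|h [|w [|c t]]] //= size_s sP hC s_bell dC hd ds.
- have hR : ~~ restrictedRow (top h) by move: sP; rewrite next_col //; case: ifP.
  case=> // _ _; rewrite dotpos_col //; apply: bell_top_lt => //.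
    exact: s_bell (mem_head _ _) hC.
  by move=> tR; rewrite tR in hR.
- case/andP: sP => /eqP /(next_col_Some hC)[-> tR].
  by rewrite next_restrictedRow.
have [/eqP /(next_col_Some hC)[ew tR] /andP[/eqP]] := andP sP; subst w.
rewrite next_restrictedRow // => -[ec] cP.
have cC : isCol c by rewrite -ec isCol_wcol.
have hB : bell_col h := s_bell h (mem_head _ _) hC.
case: (ltngtP d c) => [dc | cd | dc] p ps after_p; last first.
- by rewrite dc !inE eqxx !orbT in ds.
- case: p ps after_p => [|[|q]] ps after_p.
  1,2: by have := after_p c; rewrite /= !inE eqxx ?orbT ltnNge (ltnW cd) => /(_ isT cC).
  apply: (IH (c :: t)) => //=.
  + by move: size_s => /=; lia.
  + by move=> e et; apply: s_bell; do 2 apply: mem_behead.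
  + by move: ds; rewrite !inE !negb_or => /and3P[].
have ps' : nth 0 [:: h, top h, c & t] p \in [:: h, top h, c & t].
  by apply: mem_nth.
have [le _] := apath_dotpos_head (sP : apath [:: h, top h, c & t]) ps'.
apply: leq_ltn_trans le _; rewrite /= dotpos_col //.
by apply: bell_top_lt => // _; rewrite ec.
Qed.

(* [x] and [y] play the last dots of P'_a and P'_b, whose successors agree. *)
Section Divergence.

Variables (A B : seq nat) (a : nat).
Hypotheses (A_path : apath A) (B_path : apath B) (A_head : head 0 A = a) (a_col : isCol a).
Hypothesis A_bell : {in A, forall e, isCol e -> bell_col e}.
Hypothesis B_cols : {in B, forall d, isCol d -> top a < top d \/ a < d /\ bell_col d}.
Hypothesis B_head : ~~ isCol (head 0 B) -> top a < head 0 B.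
Hypothesis B_rows : {in B, forall e, ~~ isCol e -> restrictedRow e}.
Variables x y : nat.
Hypotheses (xA : x \in A) (yB : y \in B) (yA : y \notin A).
Hypothesis next_xy : next x = next y.

Let A_rows : {in A, forall e, ~~ isCol e -> restrictedRow e}.
Proof. by apply: apath_rows; rewrite // A_head a_col. Qed.

Let x_row_le : (dotpos x).1 <= top a.
Proof.
by have [le _] := apath_dotpos_head A_path xA; rewrite A_head (dotpos_col a_col) in le.
Qed.

Let x_above d : isCol d -> a < d -> d \notin A ->
  {in drop (index x A).+1 A, forall e, isCol e -> d < e} -> (dotpos x).1 < top d.
Proof.
move=> dC ad dA after_x; rewrite -(nth_index 0 xA).
by apply: bell_apath_above; rewrite ?A_head ?index_mem.
Qed.

Lemma divergence_end : next x = None -> (dotpos x).1 < (dotpos y).1.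
Proof.
move=> nx.
have yC : isCol y.
  by apply/negPn/negP => yR; rewrite next_xy next_restrictedRow ?B_rows in nx.
rewrite (dotpos_col yC) /=.
case: (B_cols yB yC) => [ty | [ay _]]; first exact: leq_ltn_trans x_row_le ty.
apply: x_above => // e; have := apath_from A_path xA.
by case: (drop _ A) => [|z r] //=; rewrite nx.
Qed.

Lemma divergence_col z : isCol x -> next x = Some z -> False.
Proof.
move=> xC nx; have [ez tR] := next_col_Some xC nx.
have yC : isCol y.
  apply/negPn/negP => yR; move: nx; rewrite next_xy next_restrictedRow ?B_rows // => -[zw].
  by move: (restrictedRow_notCol tR); rewrite -zw isCol_wcol ?B_rows.
have [ez' _] := next_col_Some yC (etrans (esym next_xy) nx).
case: (B_cols yB yC) => [ty | [_ yBell]].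
  by move: x_row_le; rewrite (dotpos_col xC) /= -ez ez' leqNgt ty.
suff xy : x = y by move: yA; rewrite -xy xA.
by apply: bell_col_top_inj (A_bell xA xC) yBell _; rewrite -ez ez'.
Qed.

Lemma divergence_row : ~~ isCol x -> (dotpos x).1 < (dotpos y).1.
Proof.
move=> xR; have nx := next_restrictedRow (A_rows xA xR).
have yR : ~~ isCol y.
  apply/negP => yC; have [_ tR] := next_col_Some yC (etrans (esym next_xy) nx).
  by move: (restrictedRow_notCol tR); rewrite isCol_wcol ?A_rows.
have wxy : wcol x = wcol y by move: nx; rewrite next_xy next_restrictedRow ?B_rows // => -[].
have x_le : x <= top a by move: x_row_le; rewrite dotpos_row.
rewrite (dotpos_row xR) (dotpos_row yR) /=.
have [yh | yh] := eqVneq y (head 0 B).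
  by apply: leq_ltn_trans x_le _; rewrite yh B_head // -yh.
have [d dB nd] := apath_pred B_path yB yh.
have dC : isCol d.
  apply/negPn/negP => dR; move: nd; rewrite next_restrictedRow ?B_rows // => -[dy].
  by move: yR; rewrite -dy isCol_wcol ?B_rows.
have [yd yRR] := next_col_Some dC nd; rewrite yd in yRR *.
case: (B_cols dB dC) => [td | [ad _]]; first exact: leq_ltn_trans x_le td.
have dA : d \notin A by apply: contraNN yA => dA; apply: apath_next_mem A_path dA nd.
have := x_above dC ad dA; rewrite dotpos_row //; apply=> e eA eC.
apply: leq_trans (apath_next_cols A_path xA nx (isCol_wcol (A_rows xA xR)) eA eC).
by have [_ fd _] := top_spec dC; rewrite wxy yd (fill_lt_wcol dC fd yRR).
Qed.

Lemma divergence_row_lt : (dotpos x).1 < (dotpos y).1.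
Proof.
case nx: (next x) => [z|]; last exact: divergence_end.
have [xC | xR] := boolP (isCol x); last exact: divergence_row.
by case: (divergence_col xC nx).
Qed.

End Divergence.

Lemma apath_rev_next s p : apath s -> p < size s ->
  next (nth 0 (rev s) p) = if p is q.+1 then Some (nth 0 (rev s) q) else None.
Proof.
move=> sP ps; rewrite nth_rev // apath_nth_next //; last by lia.
case: p ps => [|q] ps; first by rewrite ifF //; lia.
by rewrite ifT; [rewrite nth_rev; [congr (Some (nth _ _ _)); lia | lia] | lia].
Qed.

(* The last dot of [s] outside the common final segment of [s] and [t] is not
   on [t]: from a shared dot on, both paths agree. *)
Lemma apath_common_suffix s t c : apath s -> apath t -> s != [::] -> head 0 s \notin t ->
  c = common_prefix (rev s) (rev t) -> c < size s /\ nth 0 (rev s) c \notin t.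
Proof.
move=> sP tP s0 st cE.
have cs : c <= size s by rewrite cE -size_rev common_prefix_leq.
have c_lt : c < size s.
  rewrite ltn_neqAle cs andbT; apply: contra st => /eqP c_size.
  have := take_common_prefix (rev s) (rev t); rewrite -cE c_size take_oversize ?size_rev //.
  move=> /(congr1 (fun u => head 0 s \in u)); rewrite mem_rev -nth0 mem_nth ?lt0n ?size_eq0 //.
  by move=> /esym /mem_take; rewrite mem_rev.
split=> //; apply/negP => xt; set x := nth 0 (rev s) c in xt.
have xs : x \in s by rewrite -mem_rev mem_nth ?size_rev.
set D := drop (index x s) s.
have eS : rev s = rev D ++ rev (take (index x s) s) by rewrite -rev_cat cat_take_drop.
have eT : rev t = rev D ++ rev (take (index x t) t).
  by rewrite /D (apath_suffix sP tP xs xt) -rev_cat cat_take_drop.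
have ix : index x s <= size s - c.+1.
  by rewrite /x nth_rev // index_nth // ltn_subrL (leq_ltn_trans _ c_lt).
have cD : c < size D by rewrite size_drop ltn_subRL; move: ix; rewrite leq_subRL // addSn addnC.
have := common_prefix_max (n := size D) (s := rev s) (t := rev t).
rewrite eS eT !size_cat !size_rev !leq_addr !take_size_cat ?size_rev // => /(_ isT isT erefl).
by rewrite -eS -eT -cE leqNgt cD.
Qed.

Lemma endpos_nth a b c : c = common_prefix (rev (P a)) (rev (P b)) ->
  c < size (P a) -> endpos a b = dotpos (nth 0 (rev (P a)) c).
Proof.
move=> cE cs; rewrite /endpos /strip -cE (drop_nth 0) ?size_rev // rev_cons.
by case: (rev _) => [|u l] //=; rewrite last_rcons.
Qed.

Lemma endpos_sibling a b : is_dot a -> is_dot b -> a != b -> next a = next b ->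
  endpos a b = dotpos a.
Proof.
move=> /P_cons[s Pa] /P_cons[t Pb] ab nab.
have st : s = t by apply: apath_det nab; rewrite -?Pa -?Pb P_apath.
rewrite /endpos /strip Pa Pb st !rev_cons common_prefix_rcons //.
by rewrite -cats1 drop_size_cat ?size_rev.
Qed.

(* In the order on paths, this says P_a < P_b. *)
Lemma endpos_row_lt a b : isCol a -> is_dot b -> a \notin P b -> b \notin P a ->
  {in P a, forall e, isCol e -> bell_col e} ->
  {in P b, forall d, isCol d -> top a < top d \/ a < d /\ bell_col d} ->
  (~~ isCol b -> top a < b) ->
  (endpos a b).1 < (endpos b a).1.
Proof.
move=> aC bD aPb bPa Pa_bell Pb_cols b_row.
have aD : is_dot a by rewrite /is_dot aC.
have [Pa0 Pb0] := (P_neq0 aD, P_neq0 bD).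
set c := common_prefix (rev (P a)) (rev (P b)).
have cE' : c = common_prefix (rev (P b)) (rev (P a)) by rewrite common_prefixC.
have hPa : head 0 (P a) \notin P b by rewrite P_head.
have hPb : head 0 (P b) \notin P a by rewrite P_head.
have [ca _] := apath_common_suffix (P_apath a) (P_apath b) Pa0 hPa erefl.
have [cb yPa] := apath_common_suffix (P_apath b) (P_apath a) Pb0 hPb cE'.
rewrite (endpos_nth erefl ca) (endpos_nth cE' cb).
have xPa : nth 0 (rev (P a)) c \in P a by rewrite -mem_rev mem_nth ?size_rev.
have yPb : nth 0 (rev (P b)) c \in P b by rewrite -mem_rev mem_nth ?size_rev.
apply: (divergence_row_lt (P_apath a) (P_apath b) (P_head Pa0) aC Pa_bell Pb_cols _
  (@P_rows b) xPa yPb yPa); first by rewrite P_head.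
rewrite !apath_rev_next ?P_apath //; case E: (c) => [|q] //; congr Some.
have := take_common_prefix (rev (P a)) (rev (P b)); rewrite -/c E.
by move=> /(congr1 (nth 0 ^~ q)); rewrite !nth_take.
Qed.

Lemma path_gtE a b : path_gt a b = [&& ~~ contained a (P b), ~~ contained b (P a) &
  ((endpos b a).1 < (endpos a b).1)
  || ((endpos a b).1 == (endpos b a).1) && ((endpos a b).2 < (endpos b a).2)].
Proof. by rewrite /path_gt; case: (endpos a b) => ? ?; case: (endpos b a). Qed.

Lemma LBell_no_inversion j k : is_LBell T -> ~~ inversion j k.
Proof.
move=> LB; apply/negP => /and5P[jC jk _ kPj]; rewrite path_gtE => /and3P[jPk _].
apply/negP; rewrite negb_or negb_and -!leqNgt.
have jD : is_dot j by rewrite /is_dot jC.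
have tj := top_lt jC.
suff lt : (endpos j k).1 < (endpos k j).1 by rewrite (ltnW lt) (ltn_eqF lt).
have [kD | kND] := boolP (is_dot k); last first.
  (* P_k is empty and ends to the right of row k, which lies below P_j. *)
  have Pk : P k = [::] := P_nil kND.
  have -> : endpos k j = (k, 0) by rewrite /endpos /strip Pk.
  have Pj0 : 0 < size (P j) by rewrite lt0n size_eq0 P_neq0.
  rewrite (endpos_nth (c := 0)) ?Pk ?common_prefix_nil //.
  have eP : nth 0 (rev (P j)) 0 \in P j by rewrite -mem_rev mem_nth ?size_rev.
  have [le _] := apath_dotpos_head (P_apath j) eP.
  apply: leq_ltn_trans le _; rewrite P_head ?P_neq0 // (dotpos_col jC).
  exact: ltn_trans tj jk.
rewrite /contained P_neq0 //= in jPk.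
apply: endpos_row_lt => //.
- by move=> e _ eC; apply: LBell_bell_col.
- by move=> d dk dC; right; split; [apply: leq_trans jk (P_cols_ge dk dC) | apply: LBell_bell_col].
- by move=> _; apply: ltn_trans tj jk.
Qed.

Lemma leftmost_violation_inversion j : isCol j -> one_left (top j) j ->
  (forall d, isCol d -> j < d -> bell_col d) -> exists k, inversion j k.
Proof.
move=> jC j_left left_bell; have [ctj ftj _] := top_spec jC.
case/hasP: (j_left) => k kL /and3P[kC jk ftk].
exists k; rewrite /inversion jC jk kL /=.
have [_ _ top_min] := top_spec kC.
have tk : top k <= top j.
  by apply: top_min ftk; case/and3P: ctj => tR _ tj; rewrite /cell tR kC (ltn_trans tj jk).
have kPj : k \notin P j.
  apply/negP => kj'; case: (P_cols jC kj' kC) => [kj | [tR wk]]; first by rewrite kj ltnn in jk.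
  by move: (leq_ltn_trans wk (fill_lt_wcol kC ftk tR)); rewrite ltnn.
have jPk : j \notin P k by apply/negP => jk'; move: (P_cols_ge jk' jC); rewrite leqNgt jk.
have [jD kD] : is_dot j /\ is_dot k by rewrite /is_dot jC kC.
rewrite kPj path_gtE /contained !P_neq0 //= jPk kPj /=.
case: (ltngtP (top k) (top j)) tk => // [tkj | tkj] _.
  suff -> : (endpos k j).1 < (endpos j k).1 by [].
  apply: endpos_row_lt => //.
  - move=> e ek eC; apply: left_bell => //.
    exact: leq_trans jk (P_cols_ge ek eC).
  - move=> d dj dC; case: (P_cols jC dj dC) => [-> | [tR wd]]; [by left | right].
    have kd : k < d := leq_trans (fill_lt_wcol kC ftk tR) wd.
    by split=> //; apply: left_bell => //; apply: ltn_trans jk kd.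
  - by rewrite jC.
have nkj : next j = next k by rewrite !next_col // tkj.
rewrite (endpos_sibling jD kD (negbT (ltn_eqF jk)) nkj).
rewrite (endpos_sibling kD jD (negbT (gtn_eqF jk)) (esym nkj)).
by rewrite !dotpos_col //= tkj eqxx jk orbT.
Qed.

Lemma violation_inversion j : isCol j -> one_left (top j) j -> exists j0 k, inversion j0 k.
Proof.
move=> jC j_left; pose viol d := isCol d && one_left (top d) d.
have violj : exists d, viol d by exists j; rewrite /viol jC.
have viol_le d : viol d -> d <= len T.
  by case/andP => /isCol_label; rewrite labelsP => /andP[].
case: (ex_maxnP violj viol_le) => j0 /andP[j0C j0_left] j0_max.
exists j0; apply: leftmost_violation_inversion => // d dC j0d.
rewrite /bell_col dC; apply/negP => d_left.
by move: (j0_max d); rewrite /viol dC d_left leqNgt j0d => /(_ isT).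
Qed.

Lemma tab_inv_eq0 : tab_inv T = 0 <-> forall j k, ~~ inversion j k.
Proof.
rewrite /tab_inv; split => [/eqP | no_inv].
  rewrite -leqn0 leqNgt -has_count => /hasPn no_inv j k; apply/negP => jk.
  have /and5P[jC _ kL _ _] := jk.
  have : (j, k) \in [seq (j, k) | j <- labels, k <- labels].
    by apply: allpairs_f; rewrite // isCol_label.
  by move/no_inv; rewrite /= jk.
apply/eqP; rewrite -leqn0 leqNgt -has_count.
by apply/hasPn => -[j k] _; apply: no_inv.
Qed.

End Tableau.

Theorem theorem3p4 (T : tableau) :
  is_perm_tableau T -> (tab_inv T = 0 <-> is_LBell T).
Proof.
move=> T_perm; rewrite tab_inv_eq0; split=> [no_inv i j ij_top | LB j k].
  have jC : isCol T j by case/and3P: ij_top => /and3P[].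
  apply/negP; rewrite (topmost1_top T_perm ij_top) => ij_left.
  have [j0 [k jk]] := violation_inversion T_perm jC ij_left.
  by rewrite (negbTE (no_inv j0 k)) in jk.
exact: LBell_no_inversion.
Qed.
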